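(* Let $1\le n<L$ and suppose $p_k,q_k>0$ for all $k$. Let $\pi$ be the stationary distribution of the ASEP on $\Psi_{L,n}$ and $\hat\pi$ the (unique) stationary distribution of the chain on $\Omega_{L,n}$. Then for every $\psi\in\Psi_{L,n}$, $$\pi(\psi)=\sum_{\omega\in\Pi^{-1}(\psi)}\hat\pi(\omega).$$
   Context: Particle labels $k$ are taken modulo $n$, positions modulo $L$. $\Omega_{L,n}$ is the set of words $w_1\cdots w_L$ on the ring $\mathbb{Z}/L\mathbb{Z}$ over the alphabet $\{\bullet_1,\dots,\bullet_n,\Box_1,\dots,\Box_n\}$ in which each $\bullet_k$ occurs exactly once, the letters $\bullet_1,\dots,\bullet_n$ appear in this cyclic order, and the remaining $L-n$ letters are arbitrary $\Box_i$'s. The chain on $\Omega_{L,n}$ has transitions (displayed segments are consecutive positions, rest unchanged, $C$ a possibly empty word in the $\Box$-letters): (T1) $\bullet_k\Box_i \to \Box_i\bullet_k$ at rate $p_k$, if $i\neq k$; (T2) $\bullet_{k-1}\,C\,\bullet_k\Box_k \to \bullet_{k-1}\Box_{k-1}\,C\,\bullet_k$ at rate $p_k$; (T3) $\Box_i\bullet_k \to \bullet_k\Box_i$ at rate $q_k$, if $i\neq k$; (T4) $\Box_k\bullet_k\,C\,\bullet_{k+1} \to \bullet_k\,C\,\Box_{k+1}\bullet_{k+1}$ at rate $q_k$. $\Psi_{L,n}$ is the set of words on the ring $\mathbb{Z}/L\mathbb{Z}$ containing each of $\bullet_1,\dots,\bullet_n$ exactly once in this cyclic order and $L-n$ vacancies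 $\Box$; the ASEP on $\Psi_{L,n}$ has only the transitions $\bullet_k\Box\to\Box\bullet_k$ at rate $p_k$ and $\Box\bullet_k\to\bullet_k\Box$ at rate $q_k$. The map $\Pi:\Omega_{L,n}\to\Psi_{L,n}$ replaces every $\Box_i$ by $\Box$. *)

From HB Require Import structures.
From mathcomp Require Import all_boot all_order all_algebra.
Set Implicit Arguments. Unset Strict Implicit. Unset Printing Implicit Defensive.
Import Order.TTheory GRing.Theory Num.Theory.

(* Particle labels 1..n of the paper are represented by 'I_n = {0..n-1}
   (label k of the paper is ordinal k-1); k+1, k-1 mod n are ordS, ord_pred.
   Omega letters: inl k = bullet_k, inr i = Box_i.
   Psi letters:   Some k = bullet_k, None = Box. *)

Definition letterO n := ('I_n + 'I_n)%type.
Definition wordO L n := {ffun 'I_L -> letterO n}.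
Definition wordP L n := {ffun 'I_L -> option 'I_n}.

Definition fdist L (x y : 'I_L) : nat := ((y + L - x) %% L)%N.

(* each bullet_k exactly once, and bullets in cyclic order 1,...,n *)
Definition cyc_ok L n (part : 'I_L -> option 'I_n) : bool :=
  [forall k : 'I_n, #|[set x | part x == Some k]| == 1%N] &&
  [forall x0 : 'I_L, forall x : 'I_L, forall y : 'I_L,
   forall k0 : 'I_n, forall k : 'I_n, forall j : 'I_n,
     [&& val k0 == 0%N, part x0 == Some k0, part x == Some k,
         part y == Some j & (k < j)%N] ==> (fdist x0 x < fdist x0 y)%N].

Definition partO n (a : letterO n) : option 'I_n :=
  if a is inl k then Some k else None.

Definition inOmega L n (w : wordO L n) : bool := cyc_ok (fun x => partO (w x)).
Definition inPsi L n (w : wordP L n) : bool := cyc_ok (fun x => w x).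

Definition Proj L n (w : wordO L n) : wordP L n := [ffun z => partO (w z)].

Definition swapw (T : Type) L (w : {ffun 'I_L -> T}) (x y : 'I_L) :
  {ffun 'I_L -> T} :=
  [ffun z => if z == x then w y else if z == y then w x else w z].

Section Rates.
Variables (R : realFieldType) (L n : nat) (p q : 'I_n -> R).
Local Open Scope ring_scope.

Definition asep_rate (w w' : wordP L n) : R :=
  \sum_(x : 'I_L)
   ((if w x is Some k then
       if (w (ordS x) == None) && (swapw w x (ordS x) == w') then p k else 0
     else 0) +
    (if w x is Some k then
       if (w (ord_pred x) == None) && (swapw w x (ord_pred x) == w') then q k else 0
     else 0)).

(* (T2): bullet_{k-1} C bullet_k Box_k -> bullet_{k-1} Box_{k-1} C bullet_k,
   where bullet_k sits at x. *)
Definition T2res (w : wordO L n) (x : 'I_L) (k : 'I_n) : wordO L n :=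
  let y := odflt x [pick y | w y == inl (ord_pred k)] in
  let d := (((x + L - y - 1) %% L).+1)%N in
  [ffun z => let j := fdist z (ordS x) in
     if j == 0%N then inl k
     else if (j < d)%N then w (ord_pred z)
     else if j == d then inr (ord_pred k)
     else w z].

(* (T4): Box_k bullet_k C bullet_{k+1} -> bullet_k C Box_{k+1} bullet_{k+1},
   where bullet_k sits at x. *)
Definition T4res (w : wordO L n) (x : 'I_L) (k : 'I_n) : wordO L n :=
  let y := odflt x [pick y | w y == inl (ordS k)] in
  let d := (((y + L - x - 1) %% L).+1)%N in
  [ffun z => let j := fdist (ord_pred x) z in
     if j == 0%N then inl k
     else if (j < d)%N then w (ordS z)
     else if j == d then inr (ordS k)
     else w z].

Definition rmove (w : wordO L n) (x : 'I_L) : option ('I_n * wordO L n) :=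
  match w x, w (ordS x) with
  | inl k, inr i => Some (k, if i != k then swapw w x (ordS x) else T2res w x k)
  | _, _ => None
  end.

Definition lmove (w : wordO L n) (x : 'I_L) : option ('I_n * wordO L n) :=
  match w x, w (ord_pred x) with
  | inl k, inr i => Some (k, if i != k then swapw w x (ord_pred x) else T4res w x k)
  | _, _ => None
  end.

Definition omega_rate (w w' : wordO L n) : R :=
  \sum_(x : 'I_L)
   ((if rmove w x is Some (k, v) then (if v == w' then p k else 0) else 0) +
    (if lmove w x is Some (k, v) then (if v == w' then q k else 0) else 0)).

End Rates.

Definition stationary (R : realFieldType) (T : finType) (S : pred T)
    (r : T -> T -> R) (pi : T -> R) : Prop :=
  [/\ (forall x, S x -> 0 <= pi x)%R,
      (\sum_(x | S x) pi x = 1)%R &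
      forall y, S y ->
        (\sum_(x | S x) pi x * r x y = pi y * \sum_(z | S z) r y z)%R].

From mathcomp Require Import all_boot all_order all_algebra zify.
Import Order.TTheory GRing.Theory Num.Theory.
Set Implicit Arguments. Unset Strict Implicit. Unset Printing Implicit Defensive.

(* The projection intertwines the two chains: from any omega, the total rate into
   the fibre of psi' equals the ASEP rate from Proj omega to psi', because a (T2)
   or (T4) move only shuffles empty cells between two consecutive particles and so
   projects to the same single hop as (T1) or (T3). Hence the pushforward of
   pihat is stationary for the ASEP. When n < L the ASEP is irreducible: by
   reversible left hops every configuration reaches the one with particle k at
   site k. An irreducible chain has a unique stationary distribution, so pi is
   that pushforward. *)

Section Irreducible.
Local Open Scope ring_scope.
Variables (R : realFieldType) (T : finType) (S : pred T) (r : T -> T -> R).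
Hypothesis r_ge0 : forall x y, 0 <= r x y.

Definition rate_edge : rel T := [rel x y | [&& S x, S y & 0 < r x y]].

Definition irreducible := forall x y, S x -> S y -> connect rate_edge x y.

Definition balanced (nu : T -> R) := forall y, S y ->
  \sum_(x | S x) nu x * r x y = nu y * \sum_(z | S z) r y z.

Section Balanced.
Variable nu : T -> R.
Hypotheses (nu_bal : balanced nu) (nu_ge0 : forall x, S x -> 0 <= nu x).

(* Balance at a zero [y] of [nu] leaves no room for inflow into [y]. *)
Lemma balanced_zero_edge x y : rate_edge x y -> nu y = 0 -> nu x = 0.
Proof.
case/and3P=> Sx Sy rxy nuy; have := nu_bal Sy; rewrite nuy mul0r.
move/psumr_eq0P => /(_ (fun z Sz => mulr_ge0 (nu_ge0 Sz) (r_ge0 z y)) x Sx) /eqP.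
by rewrite mulf_eq0 (gt_eqF rxy) orbF => /eqP.
Qed.

Lemma balanced_zero_connect x y : connect rate_edge x y -> nu y = 0 -> nu x = 0.
Proof.
move=> /connectP [s + ->]; elim: s x => //= z s IH x /andP [xz /IH zs] nu0.
exact: balanced_zero_edge xz (zs nu0).
Qed.

Lemma irreducible_balanced_zero : irreducible ->
  forall y, S y -> nu y = 0 -> forall x, S x -> nu x = 0.
Proof. by move=> irr y Sy nuy x Sx; apply: balanced_zero_connect (irr x y Sx Sy) nuy. Qed.

End Balanced.

Lemma irreducible_stationary_gt0 mu : irreducible -> stationary S r mu ->
  forall x, S x -> 0 < mu x.
Proof.
move=> irr [mu_ge0 mu1 mu_bal] x Sx; rewrite lt_def mu_ge0 // andbT.
apply/eqP => mux; move: mu1; rewrite big1 => [/esym/eqP|y Sy]; first by rewrite oner_eq0.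
exact: (@irreducible_balanced_zero mu mu_bal mu_ge0 irr x Sx mux y Sy).
Qed.

(* With [t] the least ratio [pi / mu] on [S], [pi - t mu] is balanced, nonnegative
   and vanishes somewhere, hence everywhere; the normalisation then forces [t = 1]. *)
Lemma irreducible_stationary_uniq pi mu : irreducible ->
  stationary S r pi -> stationary S r mu -> forall x, S x -> pi x = mu x.
Proof.
move=> irr [pi_ge0 pi1 pi_bal] mu_st x Sx.
have mu_gt0 := irreducible_stationary_gt0 irr mu_st.
case: mu_st => _ mu1 mu_bal.
have [x0 Sx0 x0_min] := arg_minP (fun y => pi y / mu y) Sx.
set t := pi x0 / mu x0 in x0_min.
pose nu y := pi y - t * mu y.
have nu_ge0 y : S y -> 0 <= nu y.
  by move=> Sy; rewrite subr_ge0 -ler_pdivlMr ?mu_gt0 // x0_min.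
have nu_x0 : nu x0 = 0 by rewrite /nu /t divfK ?subrr // gt_eqF ?mu_gt0.
have nu_bal : balanced nu.
  move=> y Sy; under eq_bigr do rewrite mulrBl -mulrA.
  by rewrite sumrB -mulr_sumr pi_bal // mu_bal // mulrBl mulrA.
have nu0 := irreducible_balanced_zero nu_bal nu_ge0 irr Sx0 nu_x0.
have t1 : t = 1.
  have : \sum_(y | S y) nu y = 0 by rewrite big1.
  by rewrite sumrB -mulr_sumr pi1 mu1 mulr1 => /eqP; rewrite subr_eq0 => /eqP.
by apply/eqP; rewrite -subr_eq0 -(mul1r (mu x)) -t1; apply/eqP/nu0.
Qed.

End Irreducible.

Section Lumping.
Local Open Scope ring_scope.
Variables (R : realFieldType) (T U : finType) (S : pred T) (S' : pred U) (f : T -> U).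
Variables (r : T -> T -> R) (r' : U -> U -> R).
Hypothesis f_in : forall x, S x -> S' (f x).
Hypothesis lumpable : forall x y', S x -> S' y' ->
  \sum_(y | S y && (f y == y')) r x y = r' (f x) y'.

Definition pushforward (pi : T -> R) (y' : U) := \sum_(x | S x && (f x == y')) pi x.

Lemma sum_pushforward (F : T -> R) (G : U -> R) :
  \sum_(x | S x) F x * G (f x) = \sum_(y' | S' y') pushforward F y' * G y'.
Proof.
rewrite (partition_big f S') //; apply: eq_bigr => y' _; rewrite mulr_suml.
by apply: eq_bigr => x /andP [_ /eqP ->].
Qed.

Lemma pushforward_stationary pi : stationary S r pi -> stationary S' r' (pushforward pi).
Proof.
case=> [pi_ge0 pi1 pi_bal]; split.
- by move=> y' _; apply: sumr_ge0 => x /andP [Sx _]; apply: pi_ge0.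
- by rewrite -pi1 (partition_big f S').
move=> y' Sy'; rewrite -sum_pushforward.
transitivity (\sum_(y | S y && (f y == y')) \sum_(x | S x) pi x * r x y).
  under eq_bigr => x Sx do rewrite -lumpable // mulr_sumr.
  by rewrite exchange_big.
rewrite /pushforward mulr_suml; apply: eq_bigr => y /andP [Sy /eqP <-].
rewrite pi_bal //; congr (_ * _); rewrite (partition_big f S') //.
by apply: eq_bigr => z' Sz'; rewrite lumpable.
Qed.

End Lumping.

Lemma swapwC (T : Type) L (w : {ffun 'I_L -> T}) x y : swapw w x y = swapw w y x.
Proof.
apply/ffunP => z; rewrite !ffunE.
by case: (eqVneq z x) => [<-|]; case: (eqVneq z y) => [e|] //; rewrite -e.
Qed.

Lemma swapwK (T : Type) L (w : {ffun 'I_L -> T}) x y : swapw (swapw w x y) x y = w.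
Proof.
apply/ffunP => z; rewrite !ffunE.
case: (eqVneq z x) => [<-|_]; first by case: (eqVneq y z) => [->|]; rewrite ?eqxx.
by case: (eqVneq z y) => [<-|]; rewrite ?eqxx.
Qed.

Lemma psumr_gt0 (R : numDomainType) (I : finType) (F : I -> R) i :
  (forall j, (0 <= F j)%R) -> (0 < F i)%R -> (0 < \sum_j F j)%R.
Proof.
move=> F_ge0 Fi; rewrite (bigD1 i) //=.
by apply: ltr_wpDr => //; apply: sumr_ge0.
Qed.

Lemma sumr_if_eq (R : nmodType) (T : finType) (P : pred T) (v : T) (a : R) :
  (\sum_(i | P i) (if v == i then a else 0) = if P v then a else 0)%R.
Proof.
rewrite -big_mkcondr; case Pv: (P v).
  apply: (big_pred1 v) => i /=.
  by rewrite [v == i]eq_sym; case: (eqVneq i v) => [->|]; rewrite ?Pv ?andbF.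
by apply: big_pred0 => i; apply/negbTE/negP => /andP [Pi /eqP vi]; rewrite vi Pi in Pv.
Qed.

(* Innermost conditionals are split first, so that no case hypothesis contains an
   [if] that [lia] cannot read. *)
Ltac case_ifs_lia :=
  repeat match goal with |- context [if ?b then _ else _] =>
    lazymatch b with context [if _ then _ else _] => fail | _ => case: (boolP b) => ? end
  end;
  lia.

Section CyclicOrdinals.
Variable L : nat.
Implicit Types a x y z : 'I_L.+1.

Lemma val_ordS x : (ordS x : nat) = if x == L :> nat then 0 else x.+1.
Proof.
rewrite /=; case: eqP => [->|h]; first by rewrite modnn.
by rewrite modn_small //; have := ltn_ord x; lia.
Qed.

Lemma val_ord_pred x : (ord_pred x : nat) = if x == 0 :> nat then L else x.-1.
Proof.
rewrite /=; case: eqP => [->|h]; first by rewrite add0n modn_small.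
have -> : (x + L.+1).-1 = x.-1 + L.+1 by have := ltn_ord x; lia.
by rewrite modnDr modn_small //; have := ltn_ord x; lia.
Qed.

Lemma fdistE x y : fdist x y = if x <= y then y - x else y + L.+1 - x.
Proof.
rewrite /fdist; case: leqP => h.
  have -> : y + L.+1 - x = (y - x) + L.+1 by lia.
  by rewrite modnDr modn_small //; have := ltn_ord y; lia.
by rewrite modn_small //; have := ltn_ord y; lia.
Qed.

Lemma ord_eqE x y : (x == y) = (nat_of_ord x == nat_of_ord y).
Proof. by []. Qed.

End CyclicOrdinals.

Ltac ord_bounds :=
  repeat match goal with x : ordinal ?m |- _ =>
    lazymatch goal with
    | _ : is_true (nat_of_ord x < m) |- _ => fail
    | _ => have := ltn_ord x; intro
    end
  end.

Ltac ring_lia :=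
  rewrite ?fdistE ?ord_eqE ?val_ordS ?val_ord_pred; ord_bounds; case_ifs_lia.

Section ForwardDistance.
Variable L : nat.
Implicit Types a x y z : 'I_L.+1.

Lemma fdist_ltn x y : fdist x y < L.+1.
Proof. ring_lia. Qed.

Lemma fdist_eq0 x y : (fdist x y == 0) = (x == y).
Proof. by rewrite ord_eqE; apply/eqP/eqP; ring_lia. Qed.

Lemma fdistxx x : fdist x x = 0.
Proof. by apply/eqP; rewrite fdist_eq0. Qed.

Lemma fdist_gt0 x y : (0 < fdist x y) = (x != y).
Proof. by rewrite lt0n fdist_eq0. Qed.

Lemma fdist_inj x : injective (fdist x).
Proof. by move=> y z e; apply: ord_inj; move: e; ring_lia. Qed.

Lemma fdist0l z : fdist ord0 z = z.
Proof. by rewrite fdistE /= subn0. Qed.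

Lemma fdist_ord_predr a z : z != a -> fdist a (ord_pred z) = (fdist a z).-1.
Proof. ring_lia. Qed.

Lemma fdist_ord_predl a z : z != ord_pred a -> fdist (ord_pred a) z = (fdist a z).+1.
Proof. ring_lia. Qed.

Lemma fdist_ordSl z a : z != a -> fdist (ordS z) a = (fdist z a).-1.
Proof. ring_lia. Qed.

Lemma fdist_ordSr z x : z != ordS x -> fdist z (ordS x) = (fdist z x).+1.
Proof. ring_lia. Qed.

Lemma fdist_rebase a y u : fdist y u =
  if fdist a y <= fdist a u then fdist a u - fdist a y else fdist a u + L.+1 - fdist a y.
Proof. ring_lia. Qed.

Definition arclen y x := if y == x then L.+1 else fdist y x.

Lemma arclen_gt0 y x : 0 < arclen y x.
Proof. by rewrite /arclen; case: eqP => // /eqP; rewrite fdist_gt0. Qed.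

Lemma arclen_mod y x : ((x + L.+1 - y - 1) %% L.+1).+1 = arclen y x.
Proof.
rewrite /arclen; case: eqP => [->|/eqP]; first by rewrite addKn subn1 modn_small.
rewrite ord_eqE fdistE; ord_bounds; case: leqP => h yx.
  have -> : x + L.+1 - y - 1 = (x - y - 1) + L.+1 by lia.
  by rewrite modnDr modn_small; lia.
by rewrite modn_small; lia.
Qed.

Lemma fdist_arclen y x z : z != x -> fdist z x < arclen y x ->
  fdist y z + fdist z x = arclen y x.
Proof. rewrite /arclen; ring_lia. Qed.

Lemma fdist_ord_pred_arclen y x : fdist y (ord_pred x) = (arclen y x).-1.
Proof. rewrite /arclen; ring_lia. Qed.

End ForwardDistance.

Section Sites.
Variables L n : nat.
Implicit Types (part : 'I_L.+1 -> option 'I_n.+1) (z u : 'I_L.+1) (i j k : 'I_n.+1).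

(* Meaningful under [cyc_ok part]; otherwise [ord0] is a junk default. *)
Definition site part k : 'I_L.+1 := odflt ord0 [pick z | part z == Some k].

Lemma cyc_ok_siteE part : cyc_ok part -> forall z k, (part z == Some k) = (z == site part k).
Proof.
move=> /andP [/forallP one _] z k.
have /cards1P [y /setP hy] := one k.
have E u : (part u == Some k) = (u == y) by have := hy u; rewrite !inE.
rewrite /site; case: pickP => [u|/(_ y)]; last by rewrite E eqxx.
by rewrite E => /eqP ->; rewrite E.
Qed.

Lemma site_eq part z k : cyc_ok part -> part z = Some k -> site part k = z.
Proof. by move=> H e; apply/esym/eqP; rewrite -(cyc_ok_siteE H) e. Qed.

Lemma part_site part k : cyc_ok part -> part (site part k) = Some k.
Proof. by move=> H; apply/eqP; rewrite (cyc_ok_siteE H). Qed.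

Lemma site_inj part : cyc_ok part -> injective (site part).
Proof. by move=> H k j e; have := part_site k H; rewrite e part_site // => -[]. Qed.

Lemma site_mono part : cyc_ok part -> forall k j, k < j ->
  fdist (site part ord0) (site part k) < fdist (site part ord0) (site part j).
Proof.
move=> H k j kj; have siteP := cyc_ok_siteE H; case/andP: H => _ /forallP ord.
move: (ord (site part ord0)) => /forallP /(_ (site part k)) /forallP /(_ (site part j)).
move=> /forallP /(_ ord0) /forallP /(_ k) /forallP /(_ j) /implyP; apply.
by rewrite /= !siteP !eqxx kj.
Qed.

Lemma cyc_ok_sites part (s : 'I_n.+1 -> 'I_L.+1) :
  (forall z k, (part z == Some k) = (z == s k)) ->
  (forall k j, k < j -> fdist (s ord0) (s k) < fdist (s ord0) (s j)) ->
  cyc_ok part.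
Proof.
move=> sP mono; apply/andP; split.
  apply/forallP => k; apply/cards1P; exists (s k); apply/setP => z.
  by rewrite !inE sP.
apply/forallP => a; apply/forallP => x; apply/forallP => y.
apply/forallP => k0; apply/forallP => k; apply/forallP => j; apply/implyP.
move=> /and5P [/eqP k00 ha hx hy kj].
have e0 : k0 = ord0 by apply: ord_inj.
by move: ha hx hy; rewrite e0 !sP => /eqP -> /eqP -> /eqP ->; apply: mono.
Qed.

Lemma eq_cyc_ok part part' : part =1 part' -> cyc_ok part = cyc_ok part'.
Proof.
suff imp (f g : 'I_L.+1 -> option 'I_n.+1) : f =1 g -> cyc_ok f -> cyc_ok g.
  by move=> e; apply/idP/idP; apply: imp => // z; rewrite e.
move=> e H; apply: (cyc_ok_sites (s := site f)); last exact: site_mono.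
by move=> z k; rewrite -e cyc_ok_siteE.
Qed.

Lemma fdist_sites part k j : cyc_ok part ->
  fdist (site part k) (site part j) =
  if k <= j then fdist (site part ord0) (site part j) - fdist (site part ord0) (site part k)
  else fdist (site part ord0) (site part j) + L.+1 - fdist (site part ord0) (site part k).
Proof.
move=> H; rewrite (fdist_rebase (site part ord0)).
case: (ltngtP k j) => [kj|jk|/ord_inj ->]; last by rewrite leqnn.
  by rewrite (ltnW (site_mono H kj)).
by rewrite leqNgt (site_mono H jk).
Qed.

(* Labels increase with the distance from particle [0], so a particle strictly inside
   the arc from particle [k] to particle [k.+1] would carry a label between them. *)
Lemma site_gap part k u : cyc_ok part ->
  0 < fdist (site part k) u < arclen (site part k) (site part (ordS k)) -> part u = None.
Proof.
move=> H; case e: (part u) => [j|//]; rewrite -(site_eq H e) /arclen.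
case: (eqVneq k (ordS k)) => [Sk|Sk].
  have n0 : n = 0 by move: (val_ordS k); rewrite -Sk; case: eqP; lia.
  have -> : j = k by apply: ord_inj; ord_bounds; lia.
  by rewrite fdistxx.
rewrite (inj_eq (site_inj H)) (negbTE Sk) (fdist_sites k j H) (fdist_sites k (ordS k) H).
set D := fdist (site part ord0).
have mono := site_mono H; rewrite -/D in mono.
have DS : (ordS k : nat) = 0 -> D (site part (ordS k)) = 0.
  move=> S0; have -> : ordS k = ord0 by apply: ord_inj.
  exact: fdistxx.
have eqD (i i' : 'I_n.+1) : (i : nat) = i' -> D (site part i) = D (site part i').
  by move/ord_inj ->.
move: (mono k (ordS k)) (mono (ordS k) j) (mono j k) (eqD j k) (eqD j (ordS k)) DS.
move: (fdist_ltn (site part ord0) (site part (ordS k))); rewrite -/D val_ordS; ord_bounds.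
case_ifs_lia.
Qed.

Section MovePred.
Variables (part part' : 'I_L.+1 -> option 'I_n.+1) (x : 'I_L.+1) (k : 'I_n.+1).
Hypotheses (H : cyc_ok part) (part_x : part x = Some k) (part_px : part (ord_pred x) = None).
Hypothesis part'E :
  forall z, part' z = if z == x then None else if z == ord_pred x then Some k else part z.

Let moved j := if j == k then ord_pred x else site part j.

Let site_k : site part k = x. Proof. exact: site_eq. Qed.

Let px_x : ord_pred x != x.
Proof. by apply: contraTneq isT => e; move: part_px; rewrite e part_x. Qed.

Let site_px j : site part j != ord_pred x.
Proof. by apply: contraTneq isT => e; move: (part_site j H); rewrite e part_px. Qed.

Let moved_siteE z j : (part' z == Some j) = (z == moved j).
Proof.
rewrite part'E /moved; case: (eqVneq z x) => [->|zx].
  case: (eqVneq j k) => [_|jk]; first by rewrite (eq_sym x) (negbTE px_x).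
  rewrite -(cyc_ok_siteE H) part_x.
  by apply/esym/negbTE/eqP => -[e]; rewrite e eqxx in jk.
case: (eqVneq z (ord_pred x)) => [->|zpx].
  case: (eqVneq j k) => [->|jk]; first by rewrite !eqxx.
  rewrite [ord_pred x == _]eq_sym (negbTE (site_px j)).
  by apply/negbTE/eqP => -[e]; rewrite e eqxx in jk.
case: (eqVneq j k) => [->|jk].
  by rewrite (negbTE zpx) (cyc_ok_siteE H) site_k (negbTE zx).
exact: cyc_ok_siteE.
Qed.

Let moved_mono i j : i < j -> fdist (moved ord0) (moved i) < fdist (moved ord0) (moved j).
Proof.
move=> ij; have mono := site_mono H.
have j0 : j != ord0 by apply: contraTneq ij => ->.
rewrite /moved; case: (eqVneq ord0 k) => [k0|k0].
  have s0 : site part ord0 = x by rewrite k0.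
  rewrite -k0 (negbTE j0) (fdist_ord_predl (site_px j)).
  case: (eqVneq i ord0) => [_|i0]; first by rewrite fdistxx.
  by rewrite (fdist_ord_predl (site_px i)) ltnS -s0 mono.
set D := fdist (site part ord0) in mono *.
have x0 : x != site part ord0 by rewrite -site_k (inj_eq (site_inj H)) eq_sym.
have Dpx : D (ord_pred x) = (D x).-1 by rewrite /D fdist_ord_predr.
have Dx : 0 < D x by rewrite /D fdist_gt0 eq_sym.
have Dne l : D (site part l) != D (ord_pred x) by rewrite (inj_eq (@fdist_inj _ _)).
move: (mono i j ij) (mono i k) (mono k j) (Dne i) (Dne j).
by case: (eqVneq i k) => [->|_]; case: (eqVneq j k) => [->|_] /=; rewrite ?Dpx ?site_k; lia.
Qed.

Lemma cyc_ok_move_pred : cyc_ok part'.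
Proof. exact: cyc_ok_sites moved_siteE moved_mono. Qed.

Lemma site_move_pred j : site part' j = if j == k then ord_pred x else site part j.
Proof.
apply: site_eq; first exact: cyc_ok_move_pred.
by apply/eqP; rewrite (moved_siteE (moved j)) eqxx.
Qed.

End MovePred.

End Sites.

Section Packing.
Variables L n : nat.
Implicit Types (psi : wordP L.+1 n.+1) (j k : 'I_n.+1) (z : 'I_L.+1).

(* Stated for [psi] rather than its eta-expansion, which [part_site] would infer. *)
Lemma inPsi_site psi k : inPsi psi -> psi (site psi k) = Some k.
Proof. exact: part_site. Qed.

Section SwapPred.
Variables (psi : wordP L.+1 n.+1) (x : 'I_L.+1) (k : 'I_n.+1).
Hypotheses (H : inPsi psi) (psi_x : psi x = Some k) (psi_px : psi (ord_pred x) = None).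
Let psi' := swapw psi x (ord_pred x).

Let psi'E z : psi' z = if z == x then None else if z == ord_pred x then Some k else psi z.
Proof. by rewrite ffunE psi_x psi_px. Qed.

Lemma inPsi_swap_pred : inPsi psi'.
Proof. exact: cyc_ok_move_pred H psi_x psi_px psi'E. Qed.

Lemma site_swap_pred j : site psi' j = if j == k then ord_pred x else site psi j.
Proof. exact: site_move_pred H psi_x psi_px psi'E j. Qed.

End SwapPred.

Definition packed psi : bool :=
  (site psi ord0 == ord0) &&
  [forall k, (k != ord0) ==> (psi (ord_pred (site psi k)) != None)].

Lemma exists_site_pred_free psi : inPsi psi -> n < L ->
  exists k, psi (ord_pred (site psi k)) = None.
Proof.
move=> H nL.
have [/existsP [k /eqP]|/existsPn occ] :=
  boolP [exists k, psi (ord_pred (site psi k)) == None].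
  by exists k.
have full z : psi z != None.
  suff: forall m z, fdist z (site psi ord0) = m -> psi z != None by apply.
  elim=> [|m IH] {}z; first by move/eqP; rewrite fdist_eq0 => /eqP ->; rewrite part_site.
  move=> zm; have za : z != site psi ord0 by rewrite -fdist_gt0 zm.
  have := IH (ordS z); rewrite fdist_ordSl // zm => /(_ erefl).
  case e: (psi (ordS z)) => [j|//] _.
  by have <- : ord_pred (site psi j) = z by rewrite (site_eq H e) ordSK.
have inj : injective (fun z => odflt ord0 (psi z)).
  move=> z1 z2; case e1: (psi z1) (full z1) => [j1|//] _.
  case e2: (psi z2) (full z2) => [j2|//] _ /= e.
  by rewrite -(site_eq H e1) -(site_eq H e2) e.
by have := leq_card _ inj; rewrite !card_ord; lia.
Qed.

(* Particles other than [0] hop left into free cells, lowering the sum of their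
   distances to particle [0]; once they are packed behind it, particle [0] hops
   left, lowering its position at the cost of at most [n.+1 <= L] in that sum. *)
Definition asep_potential psi : nat :=
  L.+1 * site psi ord0 + \sum_k fdist (site psi ord0) (site psi k).

Lemma asep_potential_hop_lt psi k : inPsi psi -> k != ord0 ->
  psi (ord_pred (site psi k)) = None ->
  asep_potential (swapw psi (site psi k) (ord_pred (site psi k))) < asep_potential psi.
Proof.
move=> H k0 free; set x := site psi k.
have sites := site_swap_pred H (inPsi_site k H) free.
have x0 : x != site psi ord0 by rewrite (inj_eq (site_inj H)).
rewrite /asep_potential sites (eq_sym ord0) (negbTE k0) ltn_add2l.
rewrite (bigD1 k) //= [X in _ < X](bigD1 k) //= sites eqxx.
under eq_bigr => i ik do rewrite sites (negbTE ik).
by rewrite ltn_add2r fdist_ord_predr // ltn_predL fdist_gt0 eq_sym.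
Qed.

Lemma asep_potential_hop0_lt psi : inPsi psi -> n < L -> site psi ord0 != ord0 ->
  psi (ord_pred (site psi ord0)) = None ->
  asep_potential (swapw psi (site psi ord0) (ord_pred (site psi ord0))) < asep_potential psi.
Proof.
move=> H nL x0 free; set x := site psi ord0 in x0 *.
have sites := site_swap_pred H (inPsi_site ord0 H) free.
have sum_le : \sum_j fdist (ord_pred x) (site (swapw psi x (ord_pred x)) j) <=
              \sum_j (fdist x (site psi j) + 1).
  apply: leq_sum => j _; rewrite sites addn1.
  case: (eqVneq j ord0) => [_|j0]; first by rewrite fdistxx.
  rewrite fdist_ord_predl //; apply: contraTneq isT => e.
  by move: (inPsi_site j H); rewrite e free.
move: sum_le; rewrite big_split /= sum_nat_const card_ord muln1.
rewrite /asep_potential sites eqxx -/x val_ord_pred ifN //.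
set S' := \sum_j fdist (ord_pred x) _; set S := \sum_j fdist x _.
have : L.+1 * x.-1 + L.+1 = L.+1 * x by rewrite -mulnSr prednK // lt0n.
by move: (L.+1 * x.-1) (L.+1 * x) => a b; lia.
Qed.

Lemma packed_site psi : inPsi psi -> packed psi -> forall k, site psi k = k :> nat.
Proof.
move=> H /andP [/eqP s0 /forallP occ].
have mono k j : k < j -> site psi k < site psi j.
  by move=> kj; have := site_mono H kj; rewrite s0 !fdist0l.
have lo m k : k = m :> nat -> m <= site psi k.
  elim: m k => [//|m IH] k km.
  have mk : m < n.+1 by have := ltn_ord k; lia.
  by have := mono (Ordinal mk) k; have := IH (Ordinal mk) erefl; rewrite /= km; lia.
have hi m k : k = m :> nat -> site psi k <= m.
  elim/ltn_ind: m k => m IH k km.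
  case: (eqVneq k ord0) => [->|k0]; first by rewrite s0.
  have := occ k; rewrite k0 /=; case e: (psi _) => [j|//] _.
  have sk0 : site psi k != ord0 by rewrite -s0 (inj_eq (site_inj H)).
  have sj : site psi j = (site psi k).-1 :> nat.
    rewrite (site_eq H e) val_ord_pred; case: ifP => [/eqP sk|//].
    by case/eqP: sk0; apply: ord_inj.
  have sk_gt0 : 0 < site psi k by rewrite lt0n.
  have jk : j < k.
    case: (ltngtP j k) => [//|kj|/ord_inj jk]; last by rewrite jk in sj; lia.
    by have := mono k j kj; lia.
  by have := IH j (leq_trans jk (eq_leq km)) j erefl; lia.
by move=> k; apply/eqP; rewrite eqn_leq hi ?lo.
Qed.

Lemma packed_uniq psi1 psi2 : inPsi psi1 -> inPsi psi2 ->
  packed psi1 -> packed psi2 -> psi1 = psi2.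
Proof.
move=> H1 H2 pk1 pk2.
have es k : site psi1 k = site psi2 k by apply: ord_inj; rewrite !packed_site.
apply/ffunP => z; case e1: (psi1 z) => [k|].
  by rewrite -(site_eq H1 e1) es part_site.
case e2: (psi2 z) => [k|//].
by move: e1; rewrite -(site_eq H2 e2) -es part_site.
Qed.

End Packing.

Section AsepMoves.
Variables (R : realFieldType) (L n : nat) (p q : 'I_n.+1 -> R).
Hypotheses (p_gt0 : forall k, (0 < p k)%R) (q_gt0 : forall k, (0 < q k)%R).
Implicit Types psi : wordP L.+1 n.+1.
Local Open Scope ring_scope.

Lemma asep_rate_ge0 psi psi' : 0 <= asep_rate p q psi psi'.
Proof.
apply: sumr_ge0 => x _; apply: addr_ge0;
  by case: (psi x) => [k|//]; case: ifP => // _; apply: ltW.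
Qed.

Let E := rate_edge (@inPsi L.+1 n.+1) (asep_rate p q).

Lemma asep_edge_swap_pred psi x k : inPsi psi -> psi x = Some k -> psi (ord_pred x) = None ->
  E psi (swapw psi x (ord_pred x)) && E (swapw psi x (ord_pred x)) psi.
Proof.
move=> H psi_x psi_px; set psi' := swapw psi x (ord_pred x).
have psi'E z : psi' z = if z == x then None else if z == ord_pred x then Some k else psi z.
  by rewrite ffunE psi_x psi_px.
have px_x : ord_pred x != x by apply: contraTneq isT => e; move: psi_px; rewrite e psi_x.
apply/andP; split; apply/and3P; split; rewrite ?(inPsi_swap_pred H psi_x psi_px) // /asep_rate.
  apply: (psumr_gt0 (i := x)) => [z|].
    by apply: addr_ge0; case: (psi z) => [j|//]; case: ifP => // _; apply: ltW.
  rewrite psi_x psi_px !eqxx /=.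
  by apply: ltr_wpDl; [case: ifP => // _; apply: ltW | apply: q_gt0].
apply: (psumr_gt0 (i := ord_pred x)) => [z|].
  by apply: addr_ge0; case: (psi' z) => [j|//]; case: ifP => // _; apply: ltW.
rewrite psi'E eqxx (negbTE px_x) ord_predK psi'E eqxx swapwC swapwK eqxx /=.
by apply: ltr_wpDr; [case: ifP => // _; apply: ltW | apply: p_gt0].
Qed.

Lemma asep_descent psi : inPsi psi -> (n < L)%N -> ~~ packed psi ->
  exists2 psi', E psi psi' && E psi' psi & (asep_potential psi' < asep_potential psi)%N.
Proof.
move=> H nL npk.
suff [k free lt] : exists2 k, psi (ord_pred (site psi k)) = None &
    (asep_potential (swapw psi (site psi k) (ord_pred (site psi k))) < asep_potential psi)%N.
  by eexists; [exact: asep_edge_swap_pred H (inPsi_site k H) free | exact: lt].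
have [/existsP [k /andP [k0 /eqP free]]|/existsPn occ] :=
  boolP [exists k, (k != ord0) && (psi (ord_pred (site psi k)) == None)].
  by exists k => //; apply: asep_potential_hop_lt.
have [k free] := exists_site_pred_free H nL.
have k0 : k = ord0 by apply/eqP; move: (occ k); rewrite free eqxx andbT negbK.
rewrite {}k0 in free; exists ord0 => //; apply: asep_potential_hop0_lt => //.
apply: contraNneq npk => s0; rewrite /packed s0 eqxx /=.
by apply/forallP => j; apply/implyP => j0; move: (occ j); rewrite j0.
Qed.

Lemma asep_connect_packed psi : inPsi psi -> (n < L)%N ->
  exists2 c, inPsi c && packed c & connect E psi c && connect E c psi.
Proof.
move=> H nL; move: {2}(asep_potential psi) (leqnn (asep_potential psi)) => m.
elim: m psi H => [|m IH] psi H le_m;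
  (case: (boolP (packed psi)) => [pk|npk]; first by exists psi; rewrite ?H ?pk ?connect0);
  have [psi' /andP [e e'] lt] := asep_descent H nL npk; first by lia.
have [|c cP /andP [c1 c2]] := IH psi' _ (leq_trans lt le_m); first by case/and3P: e.
by exists c => //; rewrite (connect_trans (connect1 e) c1) (connect_trans c2 (connect1 e')).
Qed.

Lemma asep_irreducible : (n < L)%N -> irreducible (@inPsi L.+1 n.+1) (asep_rate p q).
Proof.
move=> nL x y Sx Sy.
have [c /andP [Sc pc] /andP [xc _]] := asep_connect_packed Sx nL.
have [c' /andP [Sc' pc'] /andP [_ c'y]] := asep_connect_packed Sy nL.
by rewrite (packed_uniq Sc Sc' pc pc') in xc; apply: connect_trans xc c'y.
Qed.

End AsepMoves.

Section Projection.
Variables L n : nat.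
Implicit Types (w : wordO L.+1 n.+1) (x z : 'I_L.+1) (k : 'I_n.+1).

Lemma Proj_swapw w x y : Proj (swapw w x y) = swapw (Proj w) x y.
Proof. by apply/ffunP => z; rewrite !ffunE; case: ifP => _ //; case: ifP. Qed.

Lemma inOmega_Proj w : inOmega w = inPsi (Proj w).
Proof. by apply: eq_cyc_ok => z; rewrite ffunE. Qed.

Section T2.
Variables (w : wordO L.+1 n.+1) (x : 'I_L.+1) (k : 'I_n.+1).
Hypotheses (H : inOmega w) (w_x : w x = inl k) (w_Sx : w (ordS x) = inr k).
Let part z := partO (w z).
Let y := site part (ord_pred k).

Let site_k : site part k = x. Proof. by apply: site_eq H _; rewrite /part w_x. Qed.

Let gap u : 0 < fdist y u < arclen y x -> partO (w u) = None.
Proof. by have := @site_gap _ _ part (ord_pred k) u H; rewrite ord_predK site_k. Qed.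

Lemma Proj_T2res : Proj (T2res w x k) = swapw (Proj w) x (ordS x).
Proof.
have w_y : w y = inl (ord_pred k).
  by have := part_site (ord_pred k) H; rewrite /part; case: (w _) => // j [->].
have pick_y : [pick y | w y == inl (ord_pred k)] = Some y.
  case: pickP => [y' /eqP w_y'|/(_ y)]; last by rewrite w_y eqxx.
  by congr Some; apply/esym; apply: site_eq H _; rewrite /part w_y'.
have Sx_x : ordS x != x by apply: contraTneq isT => e; move: w_Sx; rewrite e w_x.
apply/ffunP => z; rewrite /T2res pick_y !ffunE /= arclen_mod.
have d_gt0 := arclen_gt0 y x; set d := arclen y x in d_gt0 *.
case: (eqVneq z (ordS x)) => [->|zSx]; first by rewrite fdistxx /= (negbTE Sx_x) w_x.
rewrite fdist_ordSr // /=.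
case: (eqVneq z x) => [->|zx].
  rewrite fdistxx w_Sx /=; case: ltnP => [d_gt1|]; last by case: eqP => // ? ?; lia.
  by apply: gap; rewrite fdist_ord_pred_arclen; lia.
have zx_gt0 : 0 < fdist z x by rewrite fdist_gt0.
case: ltnP => [lt_d|]; last first.
  case: eqP => // d_eq _; apply/esym/gap.
  by have := fdist_arclen (y := y) zx (_ : fdist z x < d); lia.
have yz := fdist_arclen (y := y) zx (ltnW lt_d).
have zy : z != y by apply/eqP => e; move: yz lt_d; rewrite e fdistxx; lia.
by rewrite !gap // ?fdist_ord_predr //; lia.
Qed.

End T2.

Section T4.
Variables (w : wordO L.+1 n.+1) (x : 'I_L.+1) (k : 'I_n.+1).
Hypotheses (H : inOmega w) (w_x : w x = inl k) (w_Px : w (ord_pred x) = inr k).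
Let part z := partO (w z).
Let y := site part (ordS k).

Let site_k : site part k = x. Proof. by apply: site_eq H _; rewrite /part w_x. Qed.

Let gap u : 0 < fdist x u < arclen x y -> partO (w u) = None.
Proof. by have := @site_gap _ _ part k u H; rewrite site_k. Qed.

Lemma Proj_T4res : Proj (T4res w x k) = swapw (Proj w) x (ord_pred x).
Proof.
have w_y : w y = inl (ordS k).
  by have := part_site (ordS k) H; rewrite /part; case: (w _) => // j [->].
have pick_y : [pick y | w y == inl (ordS k)] = Some y.
  case: pickP => [y' /eqP w_y'|/(_ y)]; last by rewrite w_y eqxx.
  by congr Some; apply/esym; apply: site_eq H _; rewrite /part w_y'.
have Px_x : ord_pred x != x by apply: contraTneq isT => e; move: w_Px; rewrite e w_x.
apply/ffunP => z; rewrite /T4res pick_y !ffunE /= arclen_mod.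
have d_gt0 := arclen_gt0 x y; set d := arclen x y in d_gt0 *.
case: (eqVneq z (ord_pred x)) => [->|zPx]; first by rewrite fdistxx /= (negbTE Px_x) w_x.
rewrite fdist_ord_predl // /=.
have x_Sx : x != ordS x by apply: contraTneq isT => e; move: Px_x; rewrite {1}e ordSK eqxx.
case: (eqVneq z x) => [->|zx].
  rewrite fdistxx w_Px /=; case: ltnP => [d_gt1|]; last by case: eqP => // ? ?; lia.
  by apply: gap; rewrite fdist_ordSr // fdistxx.
have xz_gt0 : 0 < fdist x z by rewrite fdist_gt0 eq_sym.
case: ltnP => [lt_d|]; last by case: eqP => // d_eq _; apply/esym/gap; lia.
have x_Sz : x != ordS z by apply: contraTneq isT => e; move: zPx; rewrite e ordSK eqxx.
by rewrite !gap // ?fdist_ordSr //; lia.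
Qed.

End T4.

End Projection.

Section OmegaLumping.
Local Open Scope ring_scope.

Lemma omega_rate_lumpable (R : realFieldType) L n (p q : 'I_n.+1 -> R)
    (w : wordO L.+1 n.+1) (psi : wordP L.+1 n.+1) :
  inOmega w -> inPsi psi ->
  \sum_(w' | inOmega w' && (Proj w' == psi)) omega_rate p q w w' = asep_rate p q (Proj w) psi.
Proof.
move=> H Hpsi.
have cond v : inOmega v && (Proj v == psi) = (Proj v == psi).
  by rewrite inOmega_Proj; case: eqP => [->|]; rewrite ?andbF ?Hpsi.
rewrite /omega_rate exchange_big /asep_rate; apply: eq_bigr => x _.
rewrite big_split /= !ffunE; congr (_ + _).
  rewrite /rmove; case w_x: (w x) => [k|i] /=; last by rewrite big1.
  case w_Sx: (w (ordS x)) => [j|i] /=; first by rewrite big1.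
  rewrite sumr_if_eq cond; case: (eqVneq i k) => [ik|_] /=; last by rewrite Proj_swapw.
  by rewrite (Proj_T2res H w_x) // w_Sx ik.
rewrite /lmove; case w_x: (w x) => [k|i] /=; last by rewrite big1.
case w_Px: (w (ord_pred x)) => [j|i] /=; first by rewrite big1.
rewrite sumr_if_eq cond; case: (eqVneq i k) => [ik|_] /=; last by rewrite Proj_swapw.
by rewrite (Proj_T4res H w_x) // w_Px ik.
Qed.

End OmegaLumping.

Unset Implicit Arguments.

Theorem corollary3p3 (R : realFieldType) (L n : nat) (p q : 'I_n -> R)
    (pi : wordP L n -> R) (pihat : wordO L n -> R) :
  (1 <= n)%N -> (n < L)%N ->
  (forall k, 0 < p k)%R -> (forall k, 0 < q k)%R ->
  stationary (@inPsi L n) (asep_rate p q) pi ->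
  stationary (@inOmega L n) (omega_rate p q) pihat ->
  forall psi : wordP L n, inPsi psi ->
    pi psi = (\sum_(w : wordO L n | inOmega w && (Proj w == psi)) pihat w)%R.
Proof.
case: n => [|n] in p q pi pihat *; first by [].
case: L => [|L] in pi pihat *; first by [].
move=> _ nL p_gt0 q_gt0 pi_st pihat_st psi Hpsi.
have lumped :
    stationary (@inPsi _ _) (asep_rate p q) (pushforward (@inOmega _ _) (@Proj _ _) pihat).
  apply: pushforward_stationary pihat_st => [w|w psi' Hw Hpsi']; first by rewrite inOmega_Proj.
  exact: omega_rate_lumpable Hw Hpsi'.
have irr := asep_irreducible p_gt0 q_gt0 nL.
by rewrite (irreducible_stationary_uniq (asep_rate_ge0 p_gt0 q_gt0) irr pi_st lumped Hpsi).
Qed.
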